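(* If $X\subset\mathbb{R}^n$ is a set of linearly separable labeled points in strong general position, then the orthogonal projections of the convex hulls of the positive and negative support vectors onto the separating hyperplane intersect at a single Radon point.
   Context: Setting: hard-margin support vector machine. We are given data points $\mathbf{x}_1,\dots,\mathbf{x}_m\in\mathbb{R}^n$ with labels $y_i\in\{-1,1\}$, assumed linearly separable. The SVM solves $\arg\min_{\mathbf{w},b}\frac12\|\mathbf{w}\|^2$ subject to $y_i(\mathbf{w}^T\mathbf{x}_i+b)\ge 1$ for all $i$. The separating hyperplane is $\{\mathbf{x}:\mathbf{w}^T\mathbf{x}+b=0\}$, and the support vectors are the $\mathbf{x}_i$ with $y_i(\mathbf{w}^T\mathbf{x}_i+b)=1$ (those lying on the margin). By the KKT conditions, $\mathbf{w}=\sum_i \alpha_i y_i\mathbf{x}_i$ with Lagrange multipliers $\alpha_i\ge 0$ and $\sum_i\alpha_i y_i=0$. A $k$-flat is a $k$-dimensional affine subspace. A labeled linearly separable set $X\subseteq\mathbb{R}^n$ is in strong general position if (i) for $k+l\le n$, no disjoint $k$-flats and $l$-flats (spanned by points of $X$) contain parallel vectors; and (ii) when the SVM is applied to $X$, the vector $\mathbf{w}$ can be uniquely written as $\mathbf{w}=\sum_{i:\alpha_i>0}\alpha_i y_i\mathbf{x}_i$ with $\alpha_i\ge 0$. Writing $X=X_-\cup X_+$ and letting $\rho$ be the orthogonal projection onto the separating hyperplane, a Radon point is a point in $\rho(\mathrm{conv}(X_-))\cap\rho(\mathrm{conv}(X_+))$, where $\mathrm{conv}$ denotes convex hull. *)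

From HB Require Import structures.
From mathcomp Require Import all_boot all_order all_algebra.
From mathcomp Require Import reals.
Set Implicit Arguments. Unset Strict Implicit. Unset Printing Implicit Defensive.
Import Order.TTheory GRing.Theory Num.Theory.
Local Open Scope ring_scope.

Section SVM.
Variables (R : realType) (n m : nat).
Implicit Types (x : 'I_m -> 'rV[R]_n) (y : 'I_m -> R) (w p q v : 'rV[R]_n)
  (b : R) (c : 'I_m -> R) (S : {set 'I_m}).

Definition dotv (u v : 'rV[R]_n) : R := \sum_(k < n) u 0 k * v 0 k.

Definition lincomb x c : 'rV[R]_n := \sum_(i < m) c i *: x i.

Definition supported c S := forall i, i \notin S -> c i = 0.

Definition in_conv x S p := exists c, supported c S /\ (forall i, 0 <= c i)
  /\ \sum_(i < m) c i = 1 /\ p = lincomb x c.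

Definition in_aff x S p := exists c, supported c S
  /\ \sum_(i < m) c i = 1 /\ p = lincomb x c.

Definition in_dir x S v := exists c, supported c S
  /\ \sum_(i < m) c i = 0 /\ v = lincomb x c.

Definition aff_indep x S := forall c, supported c S ->
  \sum_(i < m) c i = 0 -> lincomb x c = 0 -> forall i, c i = 0.

Definition svm_feasible x y w b := forall i, 1 <= y i * (dotv w (x i) + b).

Definition svm_opt x y w b := svm_feasible x y w b /\
  forall w' b', svm_feasible x y w' b' -> dotv w w / 2 <= dotv w' w' / 2.

Definition lin_separable x y :=
  exists w b, forall i, 0 < y i * (dotv w (x i) + b).

Definition sv_set x y w b (s : R) : {set 'I_m} :=
  [set i | (y i == s) && (y i * (dotv w (x i) + b) == 1)].

Definition kkt_mult x y w b (alpha : 'I_m -> R) :=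
  (forall i, 0 <= alpha i) /\
  (forall i, 0 < alpha i -> y i * (dotv w (x i) + b) = 1) /\
  \sum_(i < m) alpha i * y i = 0 /\
  w = \sum_(i < m) (alpha i * y i) *: x i.

(* (i): for k + l <= n, disjoint k-flats and l-flats spanned by points of X
   contain no common (parallel) nonzero direction.  A k-flat spanned by points
   of X is the affine hull of k+1 affinely independent points of X. *)
Definition sgp_flats x := forall A B : {set 'I_m},
  A != set0 -> B != set0 -> aff_indep x A -> aff_indep x B ->
  ((#|A| - 1) + (#|B| - 1) <= n)%N ->
  (forall p, ~ (in_aff x A p /\ in_aff x B p)) ->
  forall v, in_dir x A v -> in_dir x B v -> v = 0.

Definition sgp_unique_mult x y := forall w b, svm_opt x y w b ->
  exists! alpha, kkt_mult x y w b alpha.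

Definition strong_general_position x y := sgp_flats x /\ sgp_unique_mult x y.

Definition proj w b p : 'rV[R]_n := p - ((dotv w p + b) / dotv w w) *: w.

Definition in_proj_conv x w b S p := exists q, in_conv x S q /\ p = proj w b q.

End SVM.

From mathcomp Require Import all_boot all_order all_algebra.
From mathcomp Require Import reals.
From mathcomp Require Import ring lra.
Set Implicit Arguments. Unset Strict Implicit. Unset Printing Implicit Defensive.
Import Order.TTheory GRing.Theory Num.Theory.
Local Open Scope ring_scope.

(* The support vectors of the two classes lie on the levels w.q + b = 1 and
   w.q + b = -1, so points q+ and q- of their convex hulls have the same
   projection onto the hyperplane exactly when q+ - q- = (2/|w|^2) w.  Writing
   q+ = sum c+_i x_i and q- = sum c-_i x_i, this says precisely that
   (|w|^2/2)(c+ + c-) is a vector of KKT multipliers for w.  Conversely, by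
   complementary slackness the multipliers have total mass |w|^2, split equally
   between the two classes, so rescaling them by 2/|w|^2 on each class gives
   such a pair.  Hence a Radon point exists, and it is unique because the
   multipliers are. *)

Lemma subr_eq_swap (V : zmodType) (p q a c : V) :
  p - a = q - c <-> p - q = a - c.
Proof.
by split=> /eqP e; apply/eqP; move: e; rewrite !subr_eq => /eqP ->;
  rewrite !(addrAC _ (- c)) (addrC a).
Qed.

Section InnerProduct.
Variables (R : realType) (n m : nat).
Implicit Types (u v w p q : 'rV[R]_n) (b t : R).
Implicit Types (x : 'I_m -> 'rV[R]_n) (c : 'I_m -> R).

Lemma dotv0l v : dotv 0 v = 0.
Proof. by rewrite /dotv big1 // => k _; rewrite mxE mul0r. Qed.

Lemma dotvv_gt0 u : u != 0 -> 0 < dotv u u.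
Proof.
have sq_ge0 k : 0 <= u 0 k * u 0 k by rewrite -expr2 sqr_ge0.
move=> u0; rewrite lt0r sumr_ge0 // andbT; apply: contra u0 => /eqP uu0.
apply/eqP/rowP => k; rewrite mxE.
move: (psumr_eq0P (fun k _ => sq_ge0 k) uu0) => /(_ k isT) /eqP.
by rewrite mulf_eq0 orbb => /eqP.
Qed.

Lemma dotv_lincomb u x c : dotv u (lincomb x c) = \sum_i c i * dotv u (x i).
Proof.
rewrite /dotv /lincomb (eq_bigr (fun k => \sum_i u 0 k * (c i * x i 0 k))).
  by rewrite exchange_big; apply: eq_bigr => i _; rewrite mulr_sumr;
    apply: eq_bigr => k _; rewrite mulrCA.
by move=> k _; rewrite summxE mulr_sumr; apply: eq_bigr => i _; rewrite mxE.
Qed.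

Lemma in_conv_level x (S : {set 'I_m}) w b t q :
  {in S, forall i, dotv w (x i) + b = t} -> in_conv x S q -> dotv w q + b = t.
Proof.
move=> level [c [cS [_ [c1 ->]]]].
rewrite dotv_lincomb -[b]mul1r -[t]mul1r -c1 mulr_suml mulr_suml -big_split.
apply: eq_bigr => i _ /=; have [iS|iNS] := boolP (i \in S).
  by rewrite -mulrDr level.
by rewrite cS // !mul0r addr0.
Qed.

Lemma proj_eqP w b p q :
  proj w b p = proj w b q <-> p - q = ((dotv w p - dotv w q) / dotv w w) *: w.
Proof.
have -> : (dotv w p - dotv w q) / dotv w w
  = (dotv w p + b) / dotv w w - (dotv w q + b) / dotv w w by ring.
by rewrite scalerBl -subr_eq_swap.
Qed.

End InnerProduct.

Lemma svm_feasible_neq0 (R : realType) (n m : nat) (x : 'I_m -> 'rV[R]_n)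
    (y : 'I_m -> R) (w : 'rV[R]_n) (b : R) i j :
  svm_feasible x y w b -> y i = 1 -> y j = -1 -> w != 0.
Proof.
move=> feas yi yj; apply/eqP => w0.
by have := feas i; have := feas j; rewrite w0 !dotv0l yi yj; lra.
Qed.

Section RadonPoint.
Variables (R : realType) (n m : nat) (x : 'I_m -> 'rV[R]_n) (y : 'I_m -> R).
Variables (w : 'rV[R]_n) (b : R).
Implicit Types (s : R) (c d alpha : 'I_m -> R) (q : 'rV[R]_n).

Local Notation sv := (sv_set x y w b).
Local Notation kkt := (kkt_mult x y w b).

Let sqrN1 : (-1 : R) ^+ 2 = 1.
Proof. by rewrite sqrrN expr1n. Qed.

Let one_eq_m1 : ((1 : R) == -1) = false.
Proof. by apply/eqP; lra. Qed.

Let m1_eq_one : ((-1 : R) == 1) = false.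
Proof. by rewrite eq_sym one_eq_m1. Qed.

Lemma sv_setP s i :
  reflect (y i = s /\ y i * (dotv w (x i) + b) = 1) (i \in sv s).
Proof. by rewrite inE; apply: (iffP andP) => -[/eqP-> /eqP->]. Qed.

Lemma sv_level s i : s ^+ 2 = 1 -> i \in sv s -> dotv w (x i) + b = s.
Proof.
by move=> s2 /sv_setP[yi e]; rewrite -[LHS]mul1r -s2 expr2 -mulrA -yi e mulr1.
Qed.

Lemma conv_sv_level s q : s ^+ 2 = 1 -> in_conv x (sv s) q -> dotv w q + b = s.
Proof. by move=> s2; apply: in_conv_level => i; apply: sv_level. Qed.

Lemma supported_sv_mulr c s i : supported c (sv s) -> c i * y i = c i * s.
Proof.
by move=> cs; have [/sv_setP[-> _]|/cs->] := boolP (i \in sv s); rewrite ?mul0r.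
Qed.

Lemma sv_proj_eqP q1 q2 : in_conv x (sv 1) q1 -> in_conv x (sv (-1)) q2 ->
  proj w b q1 = proj w b q2 <-> q1 - q2 = (2 / dotv w w) *: w.
Proof.
move=> /(conv_sv_level (expr1n R 2)) h1 /(conv_sv_level sqrN1) h2.
by rewrite proj_eqP; have -> : dotv w q1 - dotv w q2 = 2 by lra.
Qed.

Lemma kkt_slack alpha i :
  kkt alpha -> alpha i * (y i * (dotv w (x i) + b)) = alpha i.
Proof.
case=> a_ge0 [a_slack _]; have [->|a_neq0] := eqVneq (alpha i) 0.
  by rewrite mul0r.
by rewrite a_slack ?mulr1 // lt0r a_neq0 a_ge0.
Qed.

Lemma kkt_sum alpha : kkt alpha -> \sum_i alpha i = dotv w w.
Proof.
move=> kkt_a; have [_ [_ [a_bal a_w]]] := kkt_a.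
rewrite {2}a_w (dotv_lincomb _ _ (fun i => alpha i * y i)).
rewrite [RHS](eq_bigr (fun i => alpha i - alpha i * y i * b)) => [|i _].
  by rewrite sumrB -mulr_suml a_bal mul0r subr0.
by rewrite -{2}(kkt_slack i kkt_a); ring.
Qed.

Definition label_part s alpha i := if y i == s then alpha i else 0.

Definition radon_coef s alpha i := 2 / dotv w w * label_part s alpha i.

Hypothesis labels : forall i, y i = 1 \/ y i = -1.
Hypothesis w_neq0 : w != 0.

Let dotvv_neq0 : dotv w w != 0.
Proof. by rewrite gt_eqF // dotvv_gt0. Qed.

Let dotvv_ge0 : 0 <= dotv w w.
Proof. exact/ltW/dotvv_gt0. Qed.

Lemma label_partsD alpha i :
  alpha i = label_part 1 alpha i + label_part (-1) alpha i.
Proof.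
rewrite /label_part; case: (labels i) => ->; rewrite eqxx.
  by rewrite one_eq_m1 addr0.
by rewrite m1_eq_one add0r.
Qed.

Lemma label_partsB alpha i :
  alpha i * y i = label_part 1 alpha i - label_part (-1) alpha i.
Proof.
rewrite /label_part; case: (labels i) => ->; rewrite eqxx.
  by rewrite one_eq_m1 subr0 mulr1.
by rewrite m1_eq_one sub0r mulrN1.
Qed.

Lemma kkt_label_mass alpha : kkt alpha ->
  \sum_i label_part 1 alpha i = dotv w w / 2 /\
  \sum_i label_part (-1) alpha i = dotv w w / 2.
Proof.
move=> kkt_a; have [_ [_ [a_bal _]]] := kkt_a.
have mass : \sum_i label_part 1 alpha i + \sum_i label_part (-1) alpha i
    = dotv w w.
  rewrite -(kkt_sum kkt_a) -big_split.
  by apply: eq_bigr => i _ /=; rewrite -label_partsD.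
have bal : \sum_i label_part 1 alpha i - \sum_i label_part (-1) alpha i = 0.
  by rewrite -sumrB -[RHS]a_bal; apply: eq_bigr => i _; rewrite -label_partsB.
by split; lra.
Qed.

Lemma radon_coef_in_conv s alpha : s ^+ 2 = 1 -> kkt alpha ->
  in_conv x (sv s) (lincomb x (radon_coef s alpha)).
Proof.
move=> s2 kkt_a; exists (radon_coef s alpha); split; [|split; [|split]] => //.
- move=> i iNs; rewrite /radon_coef /label_part.
  case: eqP => [yi|_]; last by rewrite mulr0.
  have [->|a_neq0] := eqVneq (alpha i) 0; first by rewrite mulr0.
  case/negP: iNs; apply/sv_setP; split=> //.
  by apply: (mulfI a_neq0); rewrite kkt_slack // mulr1.
- move=> i; rewrite /radon_coef /label_part mulr_ge0 ?divr_ge0 //.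
  by case: kkt_a => a_ge0 _; case: ifP => // _; apply: a_ge0.
- have [pos_mass neg_mass] := kkt_label_mass kkt_a.
  rewrite -mulr_sumr; move/eqP: s2; rewrite sqrf_eq1 => /orP[]/eqP->.
    by rewrite pos_mass; field.
  by rewrite neg_mass; field.
Qed.

Lemma radon_coef_diff alpha : kkt alpha ->
  lincomb x (radon_coef 1 alpha) - lincomb x (radon_coef (-1) alpha)
    = (2 / dotv w w) *: w.
Proof.
case=> _ [_ [_ a_w]]; rewrite /lincomb -sumrB {3}a_w scaler_sumr.
apply: eq_bigr => i _.
by rewrite -scalerBl scalerA /radon_coef -mulrBr -label_partsB.
Qed.

Lemma conv_pair_kkt d1 d2 :
  supported d1 (sv 1) -> (forall i, 0 <= d1 i) -> \sum_i d1 i = 1 ->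
  supported d2 (sv (-1)) -> (forall i, 0 <= d2 i) -> \sum_i d2 i = 1 ->
  lincomb x d1 - lincomb x d2 = (2 / dotv w w) *: w ->
  kkt (fun i => dotv w w / 2 * (d1 i + d2 i)).
Proof.
move=> d1S d1_ge0 d1_sum d2S d2_ge0 d2_sum diff.
have signed i :
    dotv w w / 2 * (d1 i + d2 i) * y i = dotv w w / 2 * (d1 i - d2 i).
  rewrite -mulrA mulrDl (supported_sv_mulr _ d1S) (supported_sv_mulr _ d2S).
  by rewrite mulr1 mulrN1.
split; [|split; [|split]].
- by move=> i; rewrite mulr_ge0 ?addr_ge0 ?divr_ge0.
- move=> i pos; have [/sv_setP[_ ->] //|i_n1] := boolP (i \in sv 1).
  have [/sv_setP[_ ->] //|i_m1] := boolP (i \in sv (-1)).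
  by move: pos; rewrite (d1S _ i_n1) (d2S _ i_m1) addr0 mulr0 ltxx.
- rewrite (eq_bigr _ (fun i _ => signed i)) -mulr_sumr sumrB.
  by rewrite d1_sum d2_sum subrr mulr0.
- rewrite {1}(_ : w = dotv w w / 2 *: (lincomb x d1 - lincomb x d2)); last first.
    have half_inv : dotv w w / 2 * (2 / dotv w w) = 1 by field.
    by rewrite diff scalerA half_inv scale1r.
  rewrite /lincomb -sumrB scaler_sumr; apply: eq_bigr => i _.
  by rewrite signed -scalerBl scalerA.
Qed.

Lemma radon_coef_conv_pair d1 d2 :
  supported d1 (sv 1) -> supported d2 (sv (-1)) ->
  radon_coef 1 (fun i => dotv w w / 2 * (d1 i + d2 i)) =1 d1.
Proof.
move=> d1S d2S i; rewrite /radon_coef /label_part; case: eqP => yi.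
  rewrite (d2S i) ?addr0; first by field.
  by apply/negP => /sv_setP[]; rewrite yi => /eqP; rewrite one_eq_m1.
by rewrite (d1S i) ?mulr0 //; apply/negP => /sv_setP[/yi].
Qed.

Lemma radon_point_mem alpha : kkt alpha ->
  in_proj_conv x w b (sv (-1)) (proj w b (lincomb x (radon_coef 1 alpha))) /\
  in_proj_conv x w b (sv 1) (proj w b (lincomb x (radon_coef 1 alpha))).
Proof.
move=> kkt_a; have pos := radon_coef_in_conv (expr1n R 2) kkt_a.
have neg := radon_coef_in_conv sqrN1 kkt_a.
split; last by exists (lincomb x (radon_coef 1 alpha)).
exists (lincomb x (radon_coef (-1) alpha)); split => //.
by apply/(sv_proj_eqP pos neg)/radon_coef_diff.
Qed.

Lemma radon_point_unique alpha p :
  (forall beta, kkt beta -> alpha = beta) ->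
  in_proj_conv x w b (sv (-1)) p -> in_proj_conv x w b (sv 1) p ->
  p = proj w b (lincomb x (radon_coef 1 alpha)).
Proof.
move=> alpha_uniq [q2 [neg ->]] [q1 [pos /esym same_proj]].
have [d2 [d2S [d2_ge0 [d2_sum q2E]]]] := neg.
have [d1 [d1S [d1_ge0 [d1_sum q1E]]]] := pos.
have diff : lincomb x d1 - lincomb x d2 = (2 / dotv w w) *: w.
  by rewrite -q1E -q2E; apply/(sv_proj_eqP pos neg).
have kkt_pair := conv_pair_kkt d1S d1_ge0 d1_sum d2S d2_ge0 d2_sum diff.
rewrite -same_proj q1E (alpha_uniq _ kkt_pair).
by congr proj; apply: eq_bigr => i _; rewrite radon_coef_conv_pair.
Qed.

End RadonPoint.

Theorem lemma5p2 (R : realType) (n m : nat) (x : 'I_m -> 'rV[R]_n)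
  (y : 'I_m -> R) (w : 'rV[R]_n) (b : R) :
  injective x ->
  (forall i, y i = 1 \/ y i = -1) ->
  (exists i, y i = 1) -> (exists i, y i = -1) ->
  lin_separable x y ->
  strong_general_position x y ->
  svm_opt x y w b ->
  exists! p : 'rV[R]_n,
    in_proj_conv x w b (sv_set x y w b (-1)) p /\
    in_proj_conv x w b (sv_set x y w b 1) p.
Proof.
move=> _ labels [i y_pos] [j y_neg] _ [_ unique_kkt] opt.
have w_neq0 := svm_feasible_neq0 opt.1 y_pos y_neg.
have [alpha [kkt_alpha alpha_uniq]] := unique_kkt w b opt.
exists (proj w b (lincomb x (radon_coef y w 1 alpha))).
split; first exact: radon_point_mem.
by move=> p [neg pos]; rewrite (radon_point_unique w_neq0 alpha_uniq neg pos).
Qed.
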